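(* Let $X$ be a compact Hausdorff space and let $a,b,c\in C(X,M_n)$ be positive elements such that $ba=a$ and $cb=b$. Then there exist open sets $U_k\subseteq X$ for $0\le k\le n$, and continuous functions $p_k\colon U_k\to M_n$ whose values are rank $k$ projections, such that: (1) $\bigcup_{k=0}^n U_k=X$; (2) if $k\le l$ and $x\in U_k\cap U_l$ then $p_k(x)\le p_l(x)$; (3) for all $x\in U_k$, $p_k(x)a(x)=a(x)$ and $c(x)p_k(x)=p_k(x)$. *)

From HB Require Import structures.
From mathcomp Require Import all_boot all_order all_algebra.
From mathcomp Require Import all_classical all_reals all_analysis.
From mathcomp Require Import complex.
Export numFieldTopology.Exports numFieldNormedType.Exports.

Set Implicit Arguments.
Unset Strict Implicit.
Unset Printing Implicit Defensive.

Import Order.TTheory GRing.Theory Num.Theory.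
Local Open Scope ring_scope.

(* The complex numbers R[i] (R a real field) get their usual metric topology
   (induced by the complex modulus), exactly as MathComp-Analysis does for
   abstract numFieldTypes in num_topology.v. Matrices 'M[R[i]]_(m,n) then
   carry the product (= norm) topology provided by matrix_normedtype.v. *)
#[export, non_forgetful_inheritance]
HB.instance Definition _ (R : rcfType) := PseudoPointedMetric.copy R[i] (R[i])^o.

Definition adjmx (R : rcfType) m n (A : 'M[R[i]]_(m, n)) : 'M[R[i]]_(n, m) :=
  map_mx conjc A^T.

Definition psd_mx (R : rcfType) n (A : 'M[R[i]]_n) : Prop :=
  adjmx A = A /\ forall v : 'cV[R[i]]_n, 0 <= (adjmx v *m A *m v) ord0 ord0.

Definition orth_proj_mx (R : rcfType) n (P : 'M[R[i]]_n) : Prop :=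
  P *m P = P /\ adjmx P = P.

Definition le_mx (R : rcfType) n (A B : 'M[R[i]]_n) : Prop := psd_mx (B - A).

From HB Require Import structures.
From mathcomp Require Import all_boot all_order all_algebra.
From mathcomp Require Import all_classical all_reals all_analysis.
From mathcomp Require Import complex.
From mathcomp Require Import ring lra zify.
Import numFieldTopology.Exports numFieldNormedType.Exports.
Import Order.TTheory GRing.Theory Num.Theory.
Local Open Scope classical_set_scope.
Local Open Scope ring_scope.
Set Implicit Arguments.
Unset Strict Implicit.
Unset Printing Implicit Defensive.

(* Only the self-adjointness of b matters.  For a level s let P_s(B) be the
   spectral projection of B onto its eigenvalues > s.  U_k collects the x having
   a level s in (0, 1), not an eigenvalue of b(x), with rank P_s(b(x)) = k, and
   p_k(x) := P_s(b(x)); the rank determines the projection, so p_k is well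
   defined, and projections of larger rank dominate.  One of the n + 1 levels
   (k + 1) / (n + 2) misses the n eigenvalues of b(x), so the U_k cover X.
   Near x0 an admissible level stays separated from the spectrum with the same
   rank (compare quadratic forms), and the Davis-Kahan sin-theta estimate bounds
   the Frobenius distance of the projections by that of the b's: this gives
   openness and continuity.  Finally ba = a puts the range of a in the
   1-eigenspace of b, inside the range of P_s as s < 1, and cb = b makes c the
   identity on the range of b, which contains that of P_s as s >= 0. *)

Section Adjoint.
Variable R : rcfType.
Local Notation C := R[i].

Lemma adjmxE m n (A : 'M[C]_(m, n)) : adjmx A = (A ^t Num.conj)%sesqui.
Proof. by []. Qed.

Lemma adjmxK m n (A : 'M[C]_(m, n)) : adjmx (adjmx A) = A.
Proof. by rewrite !adjmxE trmxCK. Qed.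

Lemma adjmxM m n p (A : 'M[C]_(m, n)) (B : 'M[C]_(n, p)) :
  adjmx (A *m B) = adjmx B *m adjmx A.
Proof. by rewrite !adjmxE trmx_mul map_mxM. Qed.

Lemma adjmxD m n (A B : 'M[C]_(m, n)) : adjmx (A + B) = adjmx A + adjmx B.
Proof. by rewrite !adjmxE linearD /= map_mxD. Qed.

Lemma adjmxN m n (A : 'M[C]_(m, n)) : adjmx (- A) = - adjmx A.
Proof. by rewrite !adjmxE linearN /= map_mxN. Qed.

Lemma adjmxB m n (A B : 'M[C]_(m, n)) : adjmx (A - B) = adjmx A - adjmx B.
Proof. by rewrite adjmxD adjmxN. Qed.

Lemma adjmx1 n : adjmx (1%:M : 'M[C]_n) = 1%:M.
Proof. by rewrite adjmxE trmx1 map_mx1. Qed.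

Lemma adjmxZ_real m n (r : R) (A : 'M[C]_(m, n)) :
  adjmx (r%:C%C *: A) = r%:C%C *: adjmx A.
Proof.
apply/matrixP => i j; rewrite !mxE; case: (A j i) => a b.
by apply/eqP; rewrite eq_complex /=; apply/andP; split; apply/eqP; ring.
Qed.

Lemma adjmx_diag_real n (e : 'I_n -> R) :
  adjmx (diag_mx (\row_j (e j)%:C%C)) = diag_mx (\row_j (e j)%:C%C).
Proof.
apply/matrixP => i j; rewrite !mxE eq_sym.
by case: eqP => [->|_]; rewrite ?mulr1n ?mulr0n ?conjc0 //; exact: conjc_real.
Qed.

Lemma mxtrace_adj n (A : 'M[C]_n) : \tr (adjmx A) = (\tr A)^*%C.
Proof. by rewrite adjmxE -map_trmx mxtrace_tr trace_map_mx. Qed.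

End Adjoint.

Section SquaredModulus.
Variable R : rcfType.
Implicit Types z : R[i].

Definition sqrnormc z : R := complex.Re z ^+ 2 + complex.Im z ^+ 2.

Lemma sqrnormcE z : (sqrnormc z)%:C%C = z^*%C * z.
Proof.
case: z => a b; rewrite /sqrnormc /=; apply/eqP; rewrite eq_complex /=.
by apply/andP; split; apply/eqP; ring.
Qed.

Lemma sqrnormc_ge0 z : 0 <= sqrnormc z.
Proof. by rewrite addr_ge0 // sqr_ge0. Qed.

Lemma sqrnormc_eq0 z : sqrnormc z = 0 -> z = 0.
Proof.
case: z => a b; rewrite /sqrnormc /= => /eqP; rewrite paddr_eq0 ?sqr_ge0 //.
by rewrite !sqrf_eq0 => /andP[/eqP-> /eqP->].
Qed.

Lemma sqrnormcN z : sqrnormc (- z) = sqrnormc z.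
Proof. by case: z => a b; rewrite /sqrnormc /= !sqrrN. Qed.

Lemma sqrnormcJ z : sqrnormc z^*%C = sqrnormc z.
Proof. by case: z => a b; rewrite /sqrnormc /= sqrrN. Qed.

Lemma sqrnormcB_le (x y : R[i]) : sqrnormc (x - y) <= 2 * sqrnormc x + 2 * sqrnormc y.
Proof.
case: x y => a b [c d]; rewrite /sqrnormc /=.
have := sqr_ge0 (a + c); have := sqr_ge0 (b + d); rewrite !sqrrD; lra.
Qed.

Definition modc z : R := Num.sqrt (sqrnormc z).

Lemma normc_modc z : `|z| = (modc z)%:C%C.
Proof. by rewrite normc_def. Qed.

Lemma modc_ge0 z : 0 <= modc z.
Proof. exact: sqrtr_ge0. Qed.

Lemma sqr_modc z : modc z ^+ 2 = sqrnormc z.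
Proof. by rewrite sqr_sqrtr // sqrnormc_ge0. Qed.

Lemma modcN z : modc (- z) = modc z.
Proof. by rewrite /modc sqrnormcN. Qed.

Lemma modcJ z : modc z^*%C = modc z.
Proof. by rewrite /modc sqrnormcJ. Qed.

Lemma modcM (x y : R[i]) : modc (x * y) = modc x * modc y.
Proof.
by apply: complexI; rewrite -normc_modc normrM !normc_modc; symmetry; exact: rmorphM.
Qed.

End SquaredModulus.

Section QuadraticForm.
Variables (R : rcfType) (n : nat).
Local Notation C := R[i].
Implicit Types (A B P : 'M[C]_n) (v : 'cV[C]_n).

Definition qform A v : C := (adjmx v *m A *m v) 0 0.

Definition vnorm2 v : R := \sum_i sqrnormc (v i 0).

Lemma qformD A B v : qform (A + B) v = qform A v + qform B v.
Proof. by rewrite /qform mulmxDr mulmxDl mxE. Qed.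

Lemma qformN A v : qform (- A) v = - qform A v.
Proof. by rewrite /qform mulmxN mulNmx mxE. Qed.

Lemma qformB A B v : qform (A - B) v = qform A v - qform B v.
Proof. by rewrite qformD qformN. Qed.

Lemma qformM P A v : qform (adjmx P *m A *m P) v = qform A (P *m v).
Proof. by rewrite /qform adjmxM !mulmxA. Qed.

Lemma qform_scalar (r : C) v : qform r%:M v = r * qform 1%:M v.
Proof. by rewrite /qform mul_mx_scalar mulmx1 -scalemxAl mxE. Qed.

Lemma qform1 v : qform 1%:M v = (vnorm2 v)%:C%C.
Proof.
rewrite /qform mulmx1 mxE /vnorm2 rmorph_sum; apply: eq_bigr => i _.
by rewrite !mxE; apply/esym/sqrnormcE.
Qed.

Lemma qform_proj P A v : adjmx P = P -> P *m v = v -> qform (P *m A *m P) v = qform A v.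
Proof. by move=> aP Pv; rewrite -{1}aP qformM Pv. Qed.

Lemma vnorm2_ge0 v : 0 <= vnorm2 v.
Proof. by apply: sumr_ge0 => i _; apply: sqrnormc_ge0. Qed.

Lemma vnorm2_gt0 v : v != 0 -> 0 < vnorm2 v.
Proof.
move=> nz_v; rewrite lt_neqAle vnorm2_ge0 andbT eq_sym; apply: contra nz_v.
rewrite psumr_eq0 => [/allP v0|i _]; last exact: sqrnormc_ge0.
apply/eqP/matrixP => i j; rewrite ord1 mxE; apply: sqrnormc_eq0.
by apply/eqP/v0; rewrite mem_index_enum.
Qed.

End QuadraticForm.

Section SpectralCalculus.
Variables (R : rcfType) (n : nat).
Local Notation C := R[i].
Implicit Types (A B : 'M[C]_n) (f g : 'I_n -> R).

Definition selfadjoint A := adjmx A = A.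

(* The columns of [eigbasis B] form an orthonormal eigenbasis of B. *)
Definition eigbasis B : 'M[C]_n := adjmx (spectralmx B).
Definition eigval B j : R := complex.Re (spectral_diag B 0 j).
Definition diag_real f : 'M[C]_n := diag_mx (\row_j (f j)%:C%C).

(* [spec_mx B f] is f(B), for f given by its values on the eigenvalues of B. *)
Definition spec_mx B f := eigbasis B *m diag_real f *m adjmx (eigbasis B).

Lemma eigbasisK B : adjmx (eigbasis B) *m eigbasis B = 1%:M.
Proof.
by rewrite /eigbasis adjmxK; apply/unitarymxP; apply: spectral_unitarymx.
Qed.

Lemma eigbasisKV B : eigbasis B *m adjmx (eigbasis B) = 1%:M.
Proof.
rewrite /eigbasis adjmxK; have U := spectral_unitarymx B.
have := invmx_unitary U; rewrite -adjmxE => <-.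
by rewrite mulVmx // unitarymx_unit.
Qed.

Lemma spec_mx_eigval B : selfadjoint B -> B = spec_mx B (eigval B).
Proof.
move=> sa_B; have hB : B \is hermsymmx.
  by apply/is_hermitianmxP; rewrite expr0 scale1r; apply/esym: sa_B.
have /orthomx_spectralP {1}-> := hermitian_normalmx hB.
rewrite invmx_unitary ?spectral_unitarymx // /spec_mx /eigbasis adjmxK -adjmxE.
congr (_ *m diag_mx _ *m _); apply/matrixP => i j; rewrite ord1 mxE /eigval.
by have /mxOverP /(_ 0 j) /RRe_real := hermitian_spectral_diag_real hB.
Qed.

Lemma diag_realM f g : diag_real f *m diag_real g = diag_real (fun j => f j * g j).
Proof.
rewrite /diag_real mulmx_diag; congr diag_mx; apply/matrixP => i j.
by rewrite !mxE rmorphM.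
Qed.

Lemma spec_mxM B f g : spec_mx B f *m spec_mx B g = spec_mx B (fun j => f j * g j).
Proof.
rewrite /spec_mx !mulmxA -[_ *m adjmx _ *m eigbasis B]mulmxA eigbasisK mulmx1.
by rewrite -[_ *m diag_real f *m _]mulmxA diag_realM.
Qed.

Lemma spec_mxB B f g : spec_mx B f - spec_mx B g = spec_mx B (fun j => f j - g j).
Proof.
rewrite /spec_mx -mulNmx -mulmxN -mulmxDl -mulmxDr; congr (_ *m _ *m _).
rewrite /diag_real -linearN -linearD; congr diag_mx.
by apply/matrixP => i j; rewrite !mxE rmorphB.
Qed.

Lemma spec_mx_cst B r : spec_mx B (fun=> r) = r%:C%C%:M.
Proof.
rewrite /spec_mx /diag_real.
have -> : \row_j r%:C%C = const_mx r%:C%C :> 'rV[C]_n.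
  by apply/matrixP => i j; rewrite !mxE.
by rewrite diag_const_mx mul_mx_scalar -scalemxAl eigbasisKV scalemx1.
Qed.

Lemma adjmx_spec_mx B f : adjmx (spec_mx B f) = spec_mx B f.
Proof. by rewrite /spec_mx !adjmxM adjmxK adjmx_diag_real mulmxA. Qed.

Lemma qform_spec_mx B f v : qform (spec_mx B f) v =
  (\sum_j f j * sqrnormc ((adjmx (eigbasis B) *m v) j 0))%:C%C.
Proof.
rewrite /spec_mx -{1}[eigbasis B]adjmxK qformM /qform mul_mx_diag mxE rmorph_sum.
by apply: eq_bigr => j _; rewrite /= !mxE rmorphM /= sqrnormcE; ring.
Qed.

Lemma qform_spec_mx_ge0 B f v : (forall j, 0 <= f j) -> 0 <= qform (spec_mx B f) v.
Proof.
move=> f_ge0; rewrite qform_spec_mx lecR.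
by apply: sumr_ge0 => j _; rewrite mulr_ge0 ?sqrnormc_ge0.
Qed.

Lemma spec_mx_psd B f : (forall j, 0 <= f j) -> psd_mx (spec_mx B f).
Proof. by move=> f_ge0; split=> [|v]; [apply: adjmx_spec_mx | apply: qform_spec_mx_ge0]. Qed.

End SpectralCalculus.

Section SpectralProjection.
Variables (R : rcfType) (n : nat).
Local Notation C := R[i].
Implicit Types (B : 'M[C]_n) (v : 'cV[C]_n).

Definition spec_proj B (s : R) := spec_mx B (fun j => ((s < eigval B j)%R)%:R).

Lemma spec_projK B s : spec_proj B s *m spec_proj B s = spec_proj B s.
Proof.
rewrite spec_mxM; congr spec_mx; apply: funext => j.
by case: (_ < _); rewrite ?mulr1 ?mulr0.
Qed.

Lemma adjmx_spec_proj B s : adjmx (spec_proj B s) = spec_proj B s.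
Proof. exact: adjmx_spec_mx. Qed.

Lemma spec_proj_orth B s : orth_proj_mx (spec_proj B s).
Proof. by split; [apply: spec_projK | apply: adjmx_spec_proj]. Qed.

Lemma spec_projC B s :
  1%:M - spec_proj B s = spec_mx B (fun j => 1 - ((s < eigval B j)%R)%:R).
Proof. by rewrite -(spec_mx_cst B 1) spec_mxB. Qed.

Lemma spec_proj_comm B s : selfadjoint B -> B *m spec_proj B s = spec_proj B s *m B.
Proof.
move=> sa_B; rewrite {1 4}(spec_mx_eigval sa_B) /spec_proj !spec_mxM.
by congr spec_mx; apply: funext => j; rewrite mulrC.
Qed.

Lemma spec_proj_nested B s1 s2 : (forall j, s1 < eigval B j -> s2 < eigval B j) ->
  spec_proj B s2 *m spec_proj B s1 = spec_proj B s1.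
Proof.
move=> sub12; rewrite spec_mxM; congr spec_mx; apply: funext => j.
by case E: (s1 < eigval B j); rewrite ?mulr0 // (sub12 _ E) mulr1.
Qed.

Lemma le_spec_proj B s1 s2 : (forall j, s1 < eigval B j -> s2 < eigval B j) ->
  le_mx (spec_proj B s1) (spec_proj B s2).
Proof.
move=> sub12; rewrite /le_mx spec_mxB; apply: spec_mx_psd => j.
by case E: (s1 < eigval B j); rewrite ?(sub12 _ E) ?subrr // subr0; case: (_ < _).
Qed.

Lemma qform_spec_proj_ge B s r v : selfadjoint B ->
  (forall j, s < eigval B j -> r <= eigval B j) -> spec_proj B s *m v = v ->
  r%:C%C * (vnorm2 v)%:C%C <= qform B v.
Proof.
move=> sa_B ge_r Pv; rewrite -subr_ge0 -qform1 -qform_scalar -qformB.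
rewrite -(qform_proj _ (adjmx_spec_proj B s) Pv) {2}(spec_mx_eigval sa_B).
rewrite -(spec_mx_cst B) spec_mxB /spec_proj !spec_mxM; apply: qform_spec_mx_ge0 => j.
by case E: (s < eigval B j); rewrite ?mul0r ?mulr0 // mul1r mulr1 subr_ge0 ge_r.
Qed.

Lemma qform_spec_proj_le B s r v : selfadjoint B ->
  (forall j, eigval B j <= s -> eigval B j <= r) -> spec_proj B s *m v = 0 ->
  qform B v <= r%:C%C * (vnorm2 v)%:C%C.
Proof.
move=> sa_B le_r Pv; rewrite -subr_ge0 -qform1 -qform_scalar -qformB.
have Qv : (1%:M - spec_proj B s) *m v = v by rewrite mulmxBl mul1mx Pv subr0.
have aQ : adjmx (1%:M - spec_proj B s) = 1%:M - spec_proj B s.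
  by rewrite adjmxB adjmx1 adjmx_spec_proj.
rewrite -(qform_proj _ aQ Qv) spec_projC [X in _ - X](spec_mx_eigval sa_B).
rewrite -(spec_mx_cst B) spec_mxB !spec_mxM; apply: qform_spec_mx_ge0 => j.
case E: (s < eigval B j); rewrite ?subrr ?mul0r ?mulr0 // subr0 mul1r mulr1.
by rewrite subr_ge0 le_r // leNgt E.
Qed.

Lemma spec_proj_fixes B s (a : 'M[C]_n) : selfadjoint B -> B *m a = a -> s < 1 ->
  spec_proj B s *m a = a.
Proof.
move=> sa_B Ba s_lt1; set Z := adjmx (eigbasis B) *m a.
have aZ : a = eigbasis B *m Z by rewrite /Z mulmxA eigbasisKV mul1mx.
have DZ : diag_real (eigval B) *m Z = Z.
  have := congr1 (mulmx (adjmx (eigbasis B))) Ba.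
  by rewrite {2}(spec_mx_eigval sa_B) /spec_mx -/Z !mulmxA eigbasisK mul1mx -!mulmxA.
rewrite {2}aZ /spec_proj /spec_mx -mulmxA -/Z -mulmxA; congr (_ *m _); clearbody Z.
apply/matrixP => i j; have /matrixP/(_ i j) := DZ.
rewrite /diag_real !mul_diag_mx !mxE.
case E: (s < eigval B i); first by rewrite mul1r.
(* Z has no component along eigenvalues other than 1, and 1 > s. *)
have ne1 : eigval B i != 1 by apply: contraFneq E => ->.
move/eqP; rewrite mul0r -subr_eq0 -{2}[Z i j]mul1r -mulrBl mulf_eq0.
case/orP=> [|/eqP //]; rewrite -rmorphB => /eqP/complexI/eqP.
by rewrite subr_eq0 (negbTE ne1).
Qed.

Lemma fixes_spec_proj B s (c : 'M[C]_n) : selfadjoint B -> c *m B = B -> 0 <= s ->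
  c *m spec_proj B s = spec_proj B s.
Proof.
move=> sa_B cB s_ge0; rewrite /spec_proj /spec_mx !mulmxA; congr (_ *m _).
have cVD : c *m eigbasis B *m diag_real (eigval B) = eigbasis B *m diag_real (eigval B).
  have := congr1 (mulmx^~ (eigbasis B)) cB.
  rewrite {1 3}(spec_mx_eigval sa_B) /spec_mx !mulmxA.
  by rewrite -![_ *m adjmx (eigbasis B) *m eigbasis B]mulmxA eigbasisK !mulmx1.
apply/matrixP => i j; have /matrixP/(_ i j) := cVD.
rewrite /diag_real !mul_mx_diag !mxE.
case E: (s < eigval B j); last by rewrite !mulr0.
have : (eigval B j)%:C%C != 0 :> C.
  by rewrite eq_complex /= negb_and lt0r_neq0 ?(le_lt_trans s_ge0 E).
by move=> nz h; rewrite (mulIf nz h).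
Qed.

End SpectralProjection.

Section SpectralProjectionRank.
Variables (R : rcfType) (n : nat).
Local Notation C := R[i].
Implicit Types (B : 'M[C]_n).

Lemma spec_proj_col B s j : spec_proj B s *m col j (eigbasis B) =
  (((s < eigval B j)%R)%:R)%:C%C *: col j (eigbasis B).
Proof.
rewrite /spec_proj /spec_mx !colE mulmxA -[_ *m adjmx _ *m eigbasis B]mulmxA.
rewrite eigbasisK mulmx1 -mulmxA scalemxAr; congr (_ *m _).
apply/matrixP => i k; rewrite /diag_real mul_diag_mx !mxE.
by case: (i =P j) => [->|_]; rewrite ?mulr1n ?mulr0n ?mulr0.
Qed.

Lemma eigbasis_col_neq0 B j : col j (eigbasis B) != 0.
Proof.
apply/eqP => /(congr1 (mulmx (adjmx (eigbasis B)))).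
rewrite mulmx0 colE mulmxA eigbasisK mul1mx => /matrixP/(_ j 0).
by rewrite !mxE !eqxx => /eqP; rewrite oner_eq0.
Qed.

Lemma rank_spec_proj_nested B s1 s2 : (forall j, s1 < eigval B j -> s2 < eigval B j) ->
  (\rank (spec_proj B s1) <= \rank (spec_proj B s2))%N.
Proof.
move=> sub12; rewrite -mxrank_tr -[X in (_ <= X)%N]mxrank_tr; apply: mxrankS.
by rewrite -(spec_proj_nested sub12) trmx_mul submxMl.
Qed.

(* An eigenvector in the range of the larger projection but not of the smaller
   one would make the range strictly larger. *)
Lemma spec_proj_nested_rank_eq B s1 s2 :
  (forall j, s1 < eigval B j -> s2 < eigval B j) ->
  (\rank (spec_proj B s2) <= \rank (spec_proj B s1))%N ->
  forall j, (s1 < eigval B j) = (s2 < eigval B j).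
Proof.
move=> sub12 rk21 j; case E1: (s1 < eigval B j); first by rewrite (sub12 _ E1).
apply/esym/negbTE/negP => E2; set v := col j (eigbasis B).
have P2v : spec_proj B s2 *m v = v by rewrite spec_proj_col E2 scale1r.
have P1v : spec_proj B s1 *m v = 0 by rewrite spec_proj_col E1 scale0r.
have v_notin1 : ~~ (v^T <= (spec_proj B s1)^T)%MS.
  apply/negP => /submxP[w /(congr1 trmx)]; rewrite trmxK trmx_mul trmxK => vE.
  move/eqP: P1v; rewrite vE mulmxA spec_projK -vE.
  by rewrite (negbTE (eigbasis_col_neq0 B j)).
have lt12 : ((spec_proj B s1)^T < (spec_proj B s2)^T)%MS.
  rewrite ltmxE; apply/andP; split.
    by rewrite -(spec_proj_nested sub12) trmx_mul submxMl.
  apply: contra v_notin1 => le21; apply: submx_trans le21.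
  by rewrite -P2v trmx_mul submxMl.
by move: rk21; rewrite -mxrank_tr -[X in (_ <= X)%N]mxrank_tr leqNgt rank_ltmx.
Qed.

Lemma spec_proj_rank_eq B s s' :
  \rank (spec_proj B s) = \rank (spec_proj B s') -> spec_proj B s = spec_proj B s'.
Proof.
wlog le_ss' : s s' / s <= s' => [hwlog rk|rk].
  by have [/hwlog->|/ltW /hwlog<-] := leP s s'.
have sub : forall j, s' < eigval B j -> s < eigval B j by move=> j; apply: le_lt_trans.
have := spec_proj_nested_rank_eq sub; rewrite rk leqnn => /(_ isT) eq_ind.
by congr spec_mx; apply: funext => j; rewrite eq_ind.
Qed.

Lemma le_spec_proj_rank B s s' :
  (\rank (spec_proj B s) <= \rank (spec_proj B s'))%N ->
  le_mx (spec_proj B s) (spec_proj B s').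
Proof.
move=> rk; apply: le_spec_proj => j; have [le_s's|lt_ss'] := leP s' s.
  exact: le_lt_trans.
have sub : forall j, s' < eigval B j -> s < eigval B j by move=> i; apply: lt_trans.
by rewrite (spec_proj_nested_rank_eq sub rk j).
Qed.

End SpectralProjectionRank.

Lemma rank_le_of_meet0 (F : fieldType) n (P Q : 'M[F]_n) : P *m P = P ->
  (forall v : 'cV_n, P *m v = v -> Q *m v = 0 -> v = 0) -> (\rank P <= \rank Q)%N.
Proof.
move=> PP meet0; rewrite leqNgt; apply/negP => rkQP.
set A := P^T; set K := kermx Q^T.
have : ~~ ((A :&: K) <= (0 : 'M[F]_n))%MS.
  apply/negP => capAK0; have := mxrank_adds_leqif A K; rewrite capAK0 => -[_ /eqP/esym].
  rewrite /A mxrank_tr mxrank_ker mxrank_tr => rkAK.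
  have := rank_leq_col (A + K)%MS; rewrite -rkAK; have := rank_leq_row Q; lia.
case/row_subPn => i; set r := row i (A :&: K)%MS => r_neq0.
have rA : (r <= A)%MS by apply: submx_trans (row_sub _ _) (capmxSl _ _).
have rK : (r <= K)%MS by apply: submx_trans (row_sub _ _) (capmxSr _ _).
have : r^T = 0.
  apply: meet0; first by have [w ->] := submxP rA; rewrite trmx_mul trmxK mulmxA PP.
  by rewrite -[Q]trmxK -trmx_mul (sub_kermxP rK) trmx0.
by move/(congr1 trmx); rewrite trmxK trmx0 => r0; move: r_neq0; rewrite r0 sub0mx.
Qed.

Lemma orth_projC (R : rcfType) n (P : 'M[R[i]]_n) :
  orth_proj_mx P -> orth_proj_mx (1%:M - P).
Proof.
case=> PP aP; split; last by rewrite adjmxB adjmx1 aP.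
by rewrite mulmxBl mul1mx mulmxBr mulmx1 PP subrr subr0.
Qed.

Section Frobenius.
Variables (R : rcfType) (n : nat).
Local Notation C := R[i].
Implicit Types (M P X Y : 'M[C]_n) (u v : 'cV[C]_n).

Definition frob2 M : R := \sum_j \sum_i sqrnormc (M i j).

Lemma frob2_ge0 M : 0 <= frob2 M.
Proof. by do 2!apply: sumr_ge0 => ? _; apply: sqrnormc_ge0. Qed.

Lemma mxtrace_frob2 M : \tr (adjmx M *m M) = (frob2 M)%:C%C.
Proof.
rewrite /mxtrace /frob2 rmorph_sum; apply: eq_bigr => j _ /=.
rewrite mxE rmorph_sum; apply: eq_bigr => i _ /=.
by rewrite sqrnormcE !mxE.
Qed.

Lemma frob2_col M : frob2 M = \sum_j vnorm2 (col j M).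
Proof. by apply: eq_bigr => j _; apply: eq_bigr => i _; rewrite mxE. Qed.

Lemma frob2_adj M : frob2 (adjmx M) = frob2 M.
Proof.
rewrite /frob2 exchange_big; apply: eq_bigr => j _; apply: eq_bigr => i _.
by rewrite !mxE sqrnormcJ.
Qed.

Lemma frob2N M : frob2 (- M) = frob2 M.
Proof. by apply: eq_bigr => j _; apply: eq_bigr => i _; rewrite mxE sqrnormcN. Qed.

Lemma frob2B_le X Y : frob2 (X - Y) <= 2 * frob2 X + 2 * frob2 Y.
Proof.
rewrite /frob2 !mulr_sumr -big_split; apply: ler_sum => j _.
rewrite !mulr_sumr -big_split; apply: ler_sum => i _.
by rewrite !mxE sqrnormcB_le.
Qed.

Lemma sqrnormc_le_frob2 M i j : sqrnormc (M i j) <= frob2 M.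
Proof.
apply: (@le_trans _ _ (\sum_i0 sqrnormc (M i0 j))).
  by rewrite (bigD1 i) //= lerDl sumr_ge0 // => *; apply: sqrnormc_ge0.
rewrite /frob2 [X in _ <= X](bigD1 j) //= lerDl.
by do 2!apply: sumr_ge0 => ? _; apply: sqrnormc_ge0.
Qed.

Lemma frob2_le M (m : R) : (forall i j, sqrnormc (M i j) <= m) ->
  frob2 M <= n%:R * n%:R * m.
Proof.
move=> le_m; apply: le_trans (ler_sum _ (fun j _ => ler_sum _ (fun i _ => le_m i j))) _.
by rewrite !sumr_const !card_ord -mulrnA -natrM mulr_natl.
Qed.

Lemma vnorm2_proj P u : orth_proj_mx P -> vnorm2 (P *m u) <= vnorm2 u.
Proof.
case=> PP aP; suff <- : vnorm2 (P *m u) + vnorm2 ((1%:M - P) *m u) = vnorm2 u.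
  by rewrite lerDl vnorm2_ge0.
apply: complexI; rewrite rmorphD /= -!qform1 -!qformM aP adjmxB adjmx1 aP.
rewrite -qformD; congr qform.
by rewrite !mulmx1 mulmxBl mul1mx mulmxBr mulmx1 PP subrr subr0 addrC subrK.
Qed.

Lemma frob2_projl P M : orth_proj_mx P -> frob2 (P *m M) <= frob2 M.
Proof.
move=> oP; rewrite !frob2_col; apply: ler_sum => j _.
by rewrite !colE -mulmxA vnorm2_proj.
Qed.

Lemma frob2_projr P M : orth_proj_mx P -> frob2 (M *m P) <= frob2 M.
Proof.
move=> [PP aP]; rewrite -frob2_adj adjmxM aP -[frob2 M]frob2_adj.
exact: frob2_projl.
Qed.

Lemma mxtrace_qform M A : \tr (adjmx M *m A *m M) = \sum_j qform A (col j M).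
Proof.
rewrite /mxtrace; apply: eq_bigr => j _.
rewrite /qform !mxE; apply: eq_bigr => k _; rewrite !mxE; congr (_ * _).
by apply: eq_bigr => i _; rewrite !mxE.
Qed.

Lemma frob2_scale_addr (g t : R) X Y : \tr (adjmx X *m Y) = t%:C%C ->
  frob2 (g%:C%C *: X + Y) = g ^+ 2 * frob2 X + 2 * g * t + frob2 Y.
Proof.
move=> trXY; have trYX : \tr (adjmx Y *m X) = t%:C%C.
  by rewrite -[X in adjmx Y *m X]adjmxK -adjmxM mxtrace_adj trXY conjc_real.
apply: complexI; rewrite -mxtrace_frob2 adjmxD adjmxZ_real mulmxDl !mulmxDr.
rewrite -!scalemxAl -!scalemxAr.
move: (mxtrace_frob2 X) (mxtrace_frob2 Y) trXY trYX.
(* Generalizing the four products keeps the rewrites below from unfolding them. *)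
move: (adjmx X *m X) (adjmx Y *m Y) (adjmx X *m Y) (adjmx Y *m X) => XX YY XY YX.
move=> trXX trYY trXY trYX; rewrite !mxtraceD !mxtraceZ trXX trYY trXY trYX.
by rewrite !(rmorphD, rmorphM) /=; ring.
Qed.

End Frobenius.

Section Perturbation.
Variables (R : rcfType) (n : nat).
Local Notation C := R[i].
Implicit Types (B M P : 'M[C]_n) (u v : 'cV[C]_n).

Lemma qform_real B v : selfadjoint B -> qform B v \is Num.real.
Proof.
by move=> sa_B; rewrite (spec_mx_eigval sa_B) qform_spec_mx; apply/complex_realP; eexists.
Qed.

Lemma qform_entry_bound M v (m : R) : (forall i j, modc (M i j) <= m) ->
  `|qform M v| <= (2 * n%:R * m * vnorm2 v)%:C%C.
Proof.
move=> le_m.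
have -> : qform M v = \sum_j \sum_i (v i 0)^*%C * M i j * v j 0.
  rewrite /qform !mxE; apply: eq_bigr => j _; rewrite !mxE mulr_suml.
  by apply: eq_bigr => i _; rewrite !mxE.
have le_term i j : `|(v i 0)^*%C * M i j * v j 0| <=
    (m * (sqrnormc (v i 0) + sqrnormc (v j 0)))%:C%C.
  rewrite normc_modc !modcM modcJ lecR -!sqr_modc.
  have := le_m i j; have := modc_ge0 (M i j).
  have := modc_ge0 (v i 0); have := modc_ge0 (v j 0).
  set x := modc (v i 0); set y := modc (v j 0); set z := modc (M i j) => y0 x0 z0 zm.
  have xzy : x * z * y <= x * m * y by rewrite ler_wpM2r // ler_wpM2l.
  have amgm : x * y <= x ^+ 2 + y ^+ 2 by nra.
  have m_ge0 : 0 <= m := le_trans z0 zm.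
  nra.
apply: le_trans (ler_norm_sum _ _ _) _.
apply: le_trans (ler_sum _ (fun j _ => ler_norm_sum _ _ _)) _.
apply: le_trans (ler_sum _ (fun j _ => ler_sum _ (fun i _ => le_term i j))) _.
have -> : \sum_j \sum_i (m * (sqrnormc (v i 0) + sqrnormc (v j 0)))%:C%C =
    (\sum_j \sum_i m * (sqrnormc (v i 0) + sqrnormc (v j 0)))%:C%C :> C.
  by rewrite rmorph_sum; apply: eq_bigr => j _ /=; rewrite rmorph_sum.
rewrite lecR (eq_bigr (fun j => m * (vnorm2 v + n%:R * sqrnormc (v j 0)))); last first.
  by move=> j _; rewrite -mulr_sumr big_split /= sumr_const card_ord mulr_natl.
rewrite -mulr_sumr big_split /= sumr_const card_ord -mulr_sumr -/(vnorm2 v).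
by rewrite -mulr_natr le_eqVlt; apply/orP; left; apply/eqP; ring.
Qed.

Lemma davis_kahan P1 B1 P2 B2 (al be : R) : orth_proj_mx P1 -> orth_proj_mx P2 ->
  B1 *m P1 = P1 *m B1 -> B2 *m P2 = P2 *m B2 -> al < be ->
  (forall u, P1 *m u = 0 -> qform B1 u <= al%:C%C * (vnorm2 u)%:C%C) ->
  (forall u, P2 *m u = u -> be%:C%C * (vnorm2 u)%:C%C <= qform B2 u) ->
  (be - al) ^+ 2 * frob2 ((1%:M - P1) *m P2) <= frob2 ((1%:M - P1) *m (B1 - B2) *m P2).
Proof.
move=> [P11 aP1] [P22 aP2] cB1 cB2 lt_al_be le_al ge_be.
set Q1 := 1%:M - P1; set X := Q1 *m P2; set Y := Q1 *m (B1 - B2) *m P2.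
have YE : Y = B1 *m X - X *m B2.
  have cQ : B1 *m Q1 = Q1 *m B1 by rewrite /Q1 mulmxBr mulmxBl mulmx1 mul1mx cB1.
  by rewrite /Y /X mulmxBr mulmxBl !mulmxA cQ -!mulmxA cB2.
have P1X j : P1 *m col j X = 0.
  by rewrite colE mulmxA /X mulmxA /Q1 mulmxBr mulmx1 P11 subrr !mul0mx.
have P2X j : P2 *m col j (adjmx X) = col j (adjmx X).
  by rewrite !colE mulmxA /X adjmxM aP2 mulmxA P22.
have le_tr : \tr (adjmx X *m Y) <= ((al - be) * frob2 X)%:C%C.
  have trXB2 : \tr (adjmx X *m (X *m B2)) = \sum_j qform B2 (col j (adjmx X)).
    by rewrite mxtrace_mulC -{1}[X]adjmxK mxtrace_qform.
  rewrite YE mulmxBr raddfB /= mulmxA mxtrace_qform trXB2.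
  rewrite mulrBl rmorphB -{2}frob2_adj !frob2_col !mulr_sumr !rmorph_sum /=.
  by apply: lerB; apply: ler_sum => j _; rewrite rmorphM /= ?le_al ?ge_be.
have [t trE] : exists t : R, \tr (adjmx X *m Y) = t%:C%C.
  exists (complex.Re (\tr (adjmx X *m Y))); move: le_tr; rewrite lecE => /andP[/eqP].
  by case: (\tr _) => a b /= <-.
set g := be - al.
have le_t : t <= - g * frob2 X by rewrite /g opprB -lecR -trE.
have := frob2_ge0 (g%:C%C *: X + Y); rewrite (frob2_scale_addr g trE).
have g_gt0 : 0 < g by rewrite subr_gt0.
have := ler_wpM2l (ltW g_gt0) le_t; lra.
Qed.

End Perturbation.

Section SpectralGap.
Variables (R : rcfType) (n : nat).
Local Notation C := R[i].
Implicit Types (B : 'M[C]_n) (v : 'cV[C]_n).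

Lemma spec_gapP B t e : 0 <= e ->
  (forall j, eigval B j <= t - e \/ t + e <= eigval B j) ->
  (forall j, t < eigval B j -> t + e <= eigval B j) /\
  (forall j, eigval B j <= t -> eigval B j <= t - e).
Proof. by move=> e_ge0 gap; split=> j; case: (gap j) => // ? ?; lra. Qed.

Section QformClose.
Variables (B0 B : 'M[C]_n) (delta : R).
Hypotheses (sa_B0 : selfadjoint B0) (sa_B : selfadjoint B).
Hypothesis qform_close : forall v, `|qform (B - B0) v| <= (delta * vnorm2 v)%:C%C.

Let qform_realB v : qform B v - qform B0 v \is Num.real.
Proof. by rewrite rpredB ?qform_real. Qed.

Lemma rank_spec_proj_le_close t r s : (forall j, t < eigval B0 j -> r <= eigval B0 j) ->
  s + delta < r -> (\rank (spec_proj B0 t) <= \rank (spec_proj B s))%N.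
Proof.
move=> ge_r lt_r; apply: rank_le_of_meet0 (spec_projK B0 t) _ => v P0v Pv.
apply/eqP; apply: contraTT lt_r => /vnorm2_gt0 v_gt0; rewrite -leNgt.
have le_B0 := qform_spec_proj_ge sa_B0 ge_r P0v.
have le_B := qform_spec_proj_le (r := s) sa_B (fun j => id) Pv.
have := qform_close v; rewrite qformB => /(real_ler_distlCDr (qform_realB v)) le_dist.
have := le_trans le_B0 (le_trans le_dist (lerD le_B (lexx _))).
by rewrite -!rmorphM -rmorphD lecR -mulrDl ler_pM2r.
Qed.

Lemma rank_close_le_spec_proj t r s : (forall j, eigval B0 j <= t -> eigval B0 j <= r) ->
  r + delta < s -> (\rank (spec_proj B s) <= \rank (spec_proj B0 t))%N.
Proof.
move=> le_r lt_s; apply: rank_le_of_meet0 (spec_projK B s) _ => v Pv P0v.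
apply/eqP; apply: contraTT lt_s => /vnorm2_gt0 v_gt0; rewrite -leNgt.
have le_B0 := qform_spec_proj_le sa_B0 le_r P0v.
have ge_B := qform_spec_proj_ge (r := s) sa_B (fun j => @ltW _ _ _ _) Pv.
have := qform_close v; rewrite qformB => /(real_ler_distlDr (qform_realB v)) le_dist.
have := le_trans ge_B (le_trans le_dist (lerD le_B0 (lexx _))).
by rewrite -!rmorphM -rmorphD lecR -mulrDl ler_pM2r.
Qed.

(* Weyl-type stability of a spectral gap. *)
Lemma spec_gap_close t : 0 < delta ->
  (forall j, eigval B0 j <= t - 4 * delta \/ t + 4 * delta <= eigval B0 j) ->
  (forall j, eigval B j <= t - delta / 2 \/ t + delta / 2 <= eigval B j) /\
  \rank (spec_proj B t) = \rank (spec_proj B0 t).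
Proof.
move=> d_gt0 gap0.
have [ge_r le_r] := spec_gapP (ltac:(lra) : 0 <= 4 * delta) gap0.
have rk_hi := rank_spec_proj_le_close (s := t + delta / 2) ge_r ltac:(lra).
have rk_lo := rank_close_le_spec_proj (s := t - delta / 2) le_r ltac:(lra).
have rk_mid1 : (\rank (spec_proj B (t + delta / 2)) <= \rank (spec_proj B t))%N.
  by apply: rank_spec_proj_nested => j; lra.
have rk_mid2 : (\rank (spec_proj B t) <= \rank (spec_proj B (t - delta / 2)))%N.
  by apply: rank_spec_proj_nested => j; lra.
have no_eig j : (t + delta / 2 < eigval B j) = (t - delta / 2 < eigval B j).
  by apply: spec_proj_nested_rank_eq (leq_trans rk_lo rk_hi) j => i; lra.
split; last by apply/eqP; rewrite eqn_leq (leq_trans rk_mid2 rk_lo) (leq_trans rk_hi rk_mid1).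
move=> j; have [lt_lo|] := ltP (t - delta / 2) (eigval B j); last by left.
by right; apply: ltW; rewrite no_eig.
Qed.

End QformClose.

Lemma frob2_spec_proj_sub B0 B t d : selfadjoint B0 -> selfadjoint B -> 0 < d ->
  (forall j, eigval B0 j <= t - 4 * d \/ t + 4 * d <= eigval B0 j) ->
  (forall j, eigval B j <= t - d / 2 \/ t + d / 2 <= eigval B j) ->
  d ^+ 2 * frob2 (spec_proj B t - spec_proj B0 t) <= frob2 (B - B0).
Proof.
move=> sa_B0 sa_B d_gt0 gap0 gap.
have [ge0 le0] := spec_gapP (ltac:(lra) : 0 <= 4 * d) gap0.
have [ge le] := spec_gapP (ltac:(lra) : 0 <= d / 2) gap.
set P := spec_proj B t; set P0 := spec_proj B0 t.
have oP := spec_proj_orth B t; have oP0 := spec_proj_orth B0 t.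
have dk1 := davis_kahan oP oP0 (spec_proj_comm t sa_B) (spec_proj_comm t sa_B0)
  (ltac:(lra) : t - d / 2 < t + 4 * d)
  (fun u => qform_spec_proj_le sa_B le) (fun u => qform_spec_proj_ge sa_B0 ge0).
have dk2 := davis_kahan oP0 oP (spec_proj_comm t sa_B0) (spec_proj_comm t sa_B)
  (ltac:(lra) : t - 4 * d < t + d / 2)
  (fun u => qform_spec_proj_le sa_B0 le0) (fun u => qform_spec_proj_ge sa_B ge).
have le1 : frob2 ((1%:M - P) *m (B - B0) *m P0) <= frob2 (B - B0).
  exact: le_trans (frob2_projr _ oP0) (frob2_projl _ (orth_projC oP)).
have le2 : frob2 ((1%:M - P0) *m (B0 - B) *m P) <= frob2 (B - B0).
  apply: le_trans (frob2_projr _ oP) _; apply: le_trans (frob2_projl _ (orth_projC oP0)) _.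
  by rewrite -opprB frob2N.
have split_sub :
    frob2 (P - P0) <= 2 * frob2 ((1%:M - P0) *m P) + 2 * frob2 ((1%:M - P) *m P0).
  have -> : P - P0 = P *m (1%:M - P0) - (1%:M - P) *m P0.
    by rewrite mulmxBr mulmxBl mulmx1 mul1mx opprB addrA subrK.
  apply: le_trans (frob2B_le _ _) _.
  by rewrite -[frob2 (P *m _)]frob2_adj adjmxM (orth_projC oP0).2 oP.2.
have := frob2_ge0 ((1%:M - P0) *m P); have := frob2_ge0 ((1%:M - P) *m P0).
move: dk1 dk2 le1 le2 split_sub.
set a := frob2 ((1%:M - P) *m P0); set b := frob2 ((1%:M - P0) *m P).
set a' := frob2 ((1%:M - P) *m (B - B0) *m P0); set b' := frob2 ((1%:M - P0) *m (B0 - B) *m P).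
have : 0 < d ^+ 2 by rewrite exprn_gt0.
nra.
Qed.

End SpectralGap.

Lemma finite_pos_lower_bound (R : realDomainType) (I : finType) (f : I -> R) :
  (forall i, 0 < f i) -> exists2 e, 0 < e & forall i, e <= f i.
Proof.
move=> f_gt0; suff [e e_gt0 le_e] : exists2 e, 0 < e & forall i, i \in enum I -> e <= f i.
  by exists e => // i; apply: le_e; rewrite mem_enum.
elim: (enum I) => [|i s [e e_gt0 le_e]]; first by exists 1.
exists (Num.min (f i) e) => [|j]; first by rewrite lt_min f_gt0 e_gt0.
by rewrite in_cons ge_min => /orP[/eqP->|/le_e->]; rewrite ?lexx ?orbT.
Qed.

(* Pigeonhole over the n + 1 levels (k + 1) / (n + 2). *)
Lemma exists_level_avoiding (R : realFieldType) n (f : 'I_n -> R) :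
  exists s : R, [/\ 0 < s, s < 1 & forall j, f j != s].
Proof.
pose c (k : 'I_n.+1) : R := k.+1%:R / n.+2%:R.
have c_inj : injective c.
  have n2_neq0 : n.+2%:R != 0 :> R by rewrite pnatr_eq0.
  move=> k k' /(mulIf (invr_neq0 n2_neq0)) /eqP.
  by rewrite eqr_nat eqSS => /eqP/ord_inj.
have [k ck] : exists k, forall j, f j != c k.
  apply/not_existsP => hit.
  have sub : {subset map c (enum 'I_n.+1) <= map f (enum 'I_n)}.
    move=> _ /mapP[k _ ->]; have /existsNP[j /negP/negbNE/eqP<-] := hit k.
    by rewrite map_f ?mem_enum.
  have := uniq_leq_size (etrans (map_inj_uniq c_inj _) (enum_uniq _)) sub.
  by rewrite !size_map -!enumT -!cardT !card_ord ltnn.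
exists (c k); split => //; first by rewrite divr_gt0 ?ltr0Sn.
by rewrite ltr_pdivrMr ?ltr0Sn // mul1r ltr_nat ltnS.
Qed.

Section SpectralProjectionClose.
Variables (R : rcfType) (n : nat).
Local Notation C := R[i].
Implicit Types (B : 'M[C]_n).

Lemma spec_gap_of_neq B t : (forall j, eigval B j != t) ->
  exists2 d, 0 < d & forall j, eigval B j <= t - 4 * d \/ t + 4 * d <= eigval B j.
Proof.
move=> neq_t; have [e e_gt0 le_e] : exists2 e, 0 < e & forall j, e <= `|eigval B j - t|.
  by apply: finite_pos_lower_bound => j; rewrite normr_gt0 subr_eq0 neq_t.
exists (e / 4) => [|j]; first by rewrite divr_gt0.
by have := le_e j; rewrite ler_normr => /orP[]; [right|left]; lra.
Qed.

Lemma spec_proj_close B0 B t d m : selfadjoint B0 -> selfadjoint B -> 0 < d ->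
  (forall j, eigval B0 j <= t - 4 * d \/ t + 4 * d <= eigval B0 j) ->
  (forall i j, modc ((B - B0) i j) <= m) -> 2 * n%:R * m <= d ->
  [/\ forall j, eigval B j != t, \rank (spec_proj B t) = \rank (spec_proj B0 t) &
      forall i j, d * modc ((spec_proj B t - spec_proj B0 t) i j) <= n%:R * m].
Proof.
move=> sa_B0 sa_B d_gt0 gap0 le_m le_d.
have qclose v : `|qform (B - B0) v| <= (d * vnorm2 v)%:C%C.
  apply: le_trans (qform_entry_bound v le_m) _.
  by rewrite lecR ler_wpM2r ?vnorm2_ge0.
have [gap rk] := spec_gap_close sa_B0 sa_B qclose d_gt0 gap0.
split=> // [j|i j].
  by apply/eqP => eq_t; case: (gap j); rewrite eq_t; lra.
have m_ge0 : 0 <= m := le_trans (modc_ge0 _) (le_m i j).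
set E := spec_proj B t - spec_proj B0 t.
have le_E := frob2_spec_proj_sub sa_B0 sa_B d_gt0 gap0 gap.
have le_BB0 : frob2 (B - B0) <= n%:R * n%:R * m ^+ 2.
  apply: frob2_le => i' j'; rewrite -sqr_modc.
  by rewrite ler_sqr ?nnegrE ?le_m ?modc_ge0.
have : (d * modc (E i j)) ^+ 2 <= (n%:R * m) ^+ 2.
  have := sqrnormc_le_frob2 E i j; rewrite -sqr_modc exprMn.
  have := ler0n R n; nra.
by rewrite ler_sqr ?nnegrE ?mulr_ge0 ?(ltW d_gt0) ?modc_ge0.
Qed.

End SpectralProjectionClose.

Section MatrixEntriesNear.
Variables (R : realType) (T : topologicalType) (p q : nat).
Implicit Types (f : T -> 'M[R[i]]_(p, q)) (x : T).

Lemma near_modc_sub f (x0 : T) (m : R) : {for x0, continuous f} -> 0 < m ->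
  \forall x \near x0, forall i j, modc ((f x - f x0) i j) < m.
Proof.
move=> cf m_gt0; have : \forall x \near x0, ball (f x0) m%:C%C (f x).
  by apply: cvg_ball; rewrite ?ltcR.
apply: filterS => x [_ close] i j; have : `|f x0 i j - f x i j| < m%:C%C := close i j.
by rewrite normc_modc ltcR -modcN opprB !mxE.
Qed.

Lemma continuous_at_modc_sub f (x0 : T) :
  (forall e : R, 0 < e -> \forall x \near x0, forall i j, modc ((f x - f x0) i j) < e) ->
  {for x0, continuous f}.
Proof.
move=> near_f; apply/cvg_ballP => e e_gt0.
have [r er] : exists r : R, e = r%:C%C by exists (complex.Re e); rewrite RRe_real ?gtr0_real.
have r_gt0 : 0 < r by rewrite -ltcR -er.
apply: filterS (near_f r r_gt0) => x close; split => // i j.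
change (`|f x0 i j - f x i j| < e); rewrite normc_modc er ltcR -modcN opprB.
by move: (close i j); rewrite !mxE.
Qed.

End MatrixEntriesNear.

Definition admissible_level (R : rcfType) n (B : 'M[R[i]]_n) (k : nat) (s : R) :=
  [/\ 0 < s, s < 1, forall j, eigval B j != s & \rank (spec_proj B s) = k].

Section LevelSets.
Variables (R : realType) (X : topologicalType) (n : nat) (b : X -> 'M[R[i]]_n).
Hypotheses (b_cont : continuous b) (b_sa : forall x, selfadjoint (b x)).

Definition level_set (k : nat) : set X := [set x | exists s, admissible_level (b x) k s].

Definition level_proj (k : nat) (x : X) : 'M[R[i]]_n :=
  spec_proj (b x) (xget 0 [set s | admissible_level (b x) k s]).

Lemma level_projE k x s : admissible_level (b x) k s -> level_proj k x = spec_proj (b x) s.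
Proof.
move=> adm; have [_ _ _ rk] := xgetPex 0 (ex_intro _ s adm).
by apply: spec_proj_rank_eq; rewrite rk; case: adm.
Qed.

Lemma level_proj_near k x0 (e : R) : level_set k x0 -> 0 < e ->
  \forall x \near x0, level_set k x /\
    forall i j, modc ((level_proj k x - level_proj k x0) i j) < e.
Proof.
move=> [t adm0] e_gt0; have [t_gt0 t_lt1 t_neq rk0] := adm0.
have [d d_gt0 gap0] := spec_gap_of_neq t_neq.
set e1 := Num.min 1 e; have e1_gt0 : 0 < e1 by rewrite lt_min ltr01 e_gt0.
have e1_le1 : e1 <= 1 by rewrite ge_min lexx.
have e1_le : e1 <= e by rewrite ge_min lexx orbT.
have n_ge0 : 0 <= n%:R :> R := ler0n _ _.
set m := d * e1 / (2 * n%:R + 2).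
have m_gt0 : 0 < m by rewrite divr_gt0 ?mulr_gt0 //; lra.
have mE : m * (2 * n%:R + 2) = d * e1 by rewrite mulfVK // gt_eqF //; lra.
have le_d : 2 * n%:R * m <= d by nra.
have lt_de : n%:R * m < d * e by nra.
have := near_modc_sub (@b_cont x0) m_gt0; apply: filterS => x close.
have [t_neq' rk le_nm] :=
  spec_proj_close (b_sa x0) (b_sa x) d_gt0 gap0 (fun i j => ltW (close i j)) le_d.
have adm : admissible_level (b x) k t by split; rewrite ?rk.
split=> [|i j]; first by exists t.
rewrite (level_projE adm) (level_projE adm0) -(ltr_pM2l d_gt0).
exact: le_lt_trans (le_nm i j) lt_de.
Qed.

Lemma open_level_set k : open (level_set k).
Proof.
rewrite openE => x0 Ux0.
by apply: filterS (level_proj_near Ux0 ltr01) => x [].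
Qed.

Lemma level_proj_continuous k : {within level_set k, continuous (level_proj k)}.
Proof.
rewrite continuous_open_subspace; last exact: open_level_set.
move=> x0; rewrite inE => Ux0; apply: continuous_at_modc_sub => e e_gt0.
by apply: filterS (level_proj_near Ux0 e_gt0) => x [].
Qed.

Lemma level_set_cover : \bigcup_(k : 'I_n.+1) level_set k = [set: X].
Proof.
apply/seteqP; split => // x _.
have [s [s_gt0 s_lt1 s_neq]] := exists_level_avoiding (eigval (b x)).
have rk_lt : (\rank (spec_proj (b x) s) < n.+1)%N by rewrite ltnS rank_leq_row.
by exists (Ordinal rk_lt) => //; exists s.
Qed.

Lemma level_proj_le k l x : (k <= l)%N -> level_set k x -> level_set l x ->
  le_mx (level_proj k x) (level_proj l x).
Proof.
move=> le_kl [s adm_s] [s' adm_s']; rewrite (level_projE adm_s) (level_projE adm_s').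
by apply: le_spec_proj_rank; case: adm_s => _ _ _ ->; case: adm_s' => _ _ _ ->.
Qed.

End LevelSets.

Unset Implicit Arguments.
Set Strict Implicit.

Theorem lemma3p1 (R : realType) (X : topologicalType) (n : nat)
    (a b c : X -> 'M[R[i]]_n) :
  compact [set: X] -> hausdorff_space X ->
  continuous a -> continuous b -> continuous c ->
  (forall x, psd_mx (a x)) -> (forall x, psd_mx (b x)) -> (forall x, psd_mx (c x)) ->
  (forall x, b x *m a x = a x) -> (forall x, c x *m b x = b x) ->
  exists (U : 'I_n.+1 -> set X) (p : 'I_n.+1 -> X -> 'M[R[i]]_n),
    (forall k, open (U k)) /\
    (forall k, {within U k, continuous (p k)}) /\
    (forall k x, U k x -> orth_proj_mx (p k x) /\ \rank (p k x) = k) /\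
    \bigcup_k U k = [set: X] /\
    (forall (k l : 'I_n.+1) x, (k <= l)%N -> U k x -> U l x ->
       le_mx (p k x) (p l x)) /\
    (forall k x, U k x -> p k x *m a x = a x /\ c x *m p k x = p k x).
Proof.
move=> _ _ _ b_cont _ _ b_psd _ ba cb.
have b_sa x : selfadjoint (b x) by case: (b_psd x).
exists (fun k => level_set b k), (fun k => level_proj b k).
split; first by move=> k; apply: open_level_set.
split; first by move=> k; apply: level_proj_continuous.
split.
  move=> k x [s adm]; rewrite (level_projE adm).
  by split; [apply: spec_proj_orth | case: adm].
split; first exact: level_set_cover.
split; first by move=> k l x; apply: level_proj_le.
move=> k x [s adm]; rewrite (level_projE adm); case: adm => s_gt0 s_lt1 _ _.
by split; [apply: spec_proj_fixes | apply: fixes_spec_proj; rewrite ?ltW].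
Qed.
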